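(* Let $D$ be an $n\times n$ positive definite density matrix and let $A$ be an $n\times n$ self-adjoint matrix. Assume that $f,g$ are standard functions such that $$g(x)\ge c\,\frac{(x-1)^2}{f(x)}\qquad\text{for all }x>0$$ for some constant $c>0$. Then $$\mathrm{qCov}^g_D(A,A)\ \ge\ c\,\gamma^f_D\big([D,A],[D,A]\big).$$
   Context: A function $f:(0,\infty)\to(0,\infty)$ is called standard if it is operator monotone, $f(1)=1$ and $f(t)=tf(t^{-1})$ for all $t>0$. For a standard $f$ define the mean $M_f(a,b):=bf(a/b)$ for $a,b>0$. For a positive definite density matrix $D$ (i.e. $D>0$, $\mathrm{Tr}\,D=1$), let $\mathbf L_D(X)=DX$, $\mathbf R_D(X)=XD$ on $n\times n$ complex matrices and $\mathbb J^f_D:=f(\mathbf L_D\mathbf R_D^{-1})\mathbf R_D$. The quantum Fisher information is $\gamma^f_D(A,B):=\mathrm{Tr}\,A^*(\mathbb J^f_D)^{-1}(B)$ and the quantum covariance is $\mathrm{qCov}^f_D(A,B):=\mathrm{Tr}\,A^*\mathbb J^f_D(B)-(\mathrm{Tr}\,DA^* )(\mathrm{Tr}\,DB)$. Equivalently, if $D=\mathrm{Diag}(\lambda_1,\dots,\lambda_n)$ with $\lambda_i>0$, then $\gamma^f_D(A,B)=\sum_{i,j}\frac{1}{M_f(\lambda_i,\lambda_j)}\overline{A_{ij}}B_{ij}$ and $\mathrm{qCov}^f_D(A,B)=\sum_{i,j}M_f(\lambda_i,\lambda_j)\overline{A_{ij}}B_{ij}-\big(\sum_i\lambda_i\overline{A_{ii}}\big)\big(\sum_i\lambda_iB_{ii}\big)$.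 $[D,A]=DA-AD$. *)

From HB Require Import structures.
From mathcomp Require Import all_boot all_order all_algebra.
From mathcomp Require Import complex.
From mathcomp Require Import reals sesquilinear spectral.
Set Implicit Arguments. Unset Strict Implicit. Unset Printing Implicit Defensive.
Import Order.TTheory GRing.Theory Num.Theory.
Local Open Scope ring_scope.

Section QuantumDefs.
Variable R : realType.
Local Notation C := (R[i]).

Definition toC (x : R) : C := (x%:C)%C.

Definition adjmx m n (X : 'M[C]_(m, n)) : 'M[C]_(n, m) := (X ^t* )%sesqui.

(* positive semidefinite / positive definite (over C, these imply self-adjointness) *)
Definition psdmx n (X : 'M[C]_n) : Prop :=
  forall v : 'cV[C]_n, 0 <= (adjmx v *m X *m v) 0 0.
Definition pdmx n (X : 'M[C]_n) : Prop :=
  forall v : 'cV[C]_n, v != 0 -> 0 < (adjmx v *m X *m v) 0 0.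

Definition diagC n (a : 'I_n -> R) : 'M[C]_n :=
  \matrix_(i, j) (toC (a i) *+ (i == j)).

(* Operator monotonicity on (0,oo): for all sizes m and all positive definite
   matrices X <= Y (Loewner order), f(X) <= f(Y), where the functional calculus
   of a self-adjoint matrix X = U Diag(a) U^* is U Diag(f a) U^*. *)
Definition operator_monotone (f : R -> R) : Prop :=
  forall m (U V : 'M[C]_m) (a b : 'I_m -> R),
    U \is unitarymx -> V \is unitarymx ->
    (forall i, 0 < a i) -> (forall i, 0 < b i) ->
    psdmx (V *m diagC b *m adjmx V - U *m diagC a *m adjmx U) ->
    psdmx (V *m diagC (fun i => f (b i)) *m adjmx V
           - U *m diagC (fun i => f (a i)) *m adjmx U).

Definition standard (f : R -> R) : Prop :=
  [/\ forall t, 0 < t -> 0 < f t,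
      operator_monotone f,
      f 1 = 1 &
      forall t, 0 < t -> f t = t * f t^-1].

Definition Mf (f : R -> R) (a b : R) : R := b * f (a / b).

(* Given a spectral decomposition D = U Diag(lam) U^*, the superoperator
   L_D R_D^{-1} is diagonal in the basis U E_ij U^* with eigenvalues lam_i/lam_j;
   hence J^f_D = f(L_D R_D^{-1}) R_D acts by multiplying the (i,j) entry of
   U^* B U by M_f(lam_i, lam_j), and (J^f_D)^{-1} by its inverse. *)
Definition Jf (f : R -> R) n (U : 'M[C]_n) (lam : 'I_n -> R) (B : 'M[C]_n)
  : 'M[C]_n :=
  U *m (\matrix_(i, j) (toC (Mf f (lam i) (lam j)) * (adjmx U *m B *m U) i j))
    *m adjmx U.
Definition Jf_inv (f : R -> R) n (U : 'M[C]_n) (lam : 'I_n -> R) (B : 'M[C]_n)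
  : 'M[C]_n :=
  U *m (\matrix_(i, j) (toC (Mf f (lam i) (lam j))^-1 * (adjmx U *m B *m U) i j))
    *m adjmx U.

Definition qFisher (f : R -> R) n (U : 'M[C]_n) (lam : 'I_n -> R)
  (A B : 'M[C]_n) : C :=
  \tr (adjmx A *m Jf_inv f U lam B).

Definition qCov (f : R -> R) n (D U : 'M[C]_n) (lam : 'I_n -> R)
  (A B : 'M[C]_n) : C :=
  \tr (adjmx A *m Jf f U lam B) - \tr (D *m adjmx A) * \tr (D *m B).

Definition commmx n (X Y : 'M[C]_n) : 'M[C]_n := X *m Y - Y *m X.

End QuantumDefs.

From HB Require Import structures.
From mathcomp Require Import all_boot all_order all_algebra.
From mathcomp Require Import complex.
From mathcomp Require Import reals sesquilinear spectral.
From mathcomp Require Import ring lra.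
Set Implicit Arguments. Unset Strict Implicit. Unset Printing Implicit Defensive.
Import Order.TTheory GRing.Theory Num.Theory.
Local Open Scope ring_scope.

(* Conjugating by U diagonalises D.  With B := U^* A U (again self-adjoint),
   qCov^g_D(A,A) = sum_ij M_g(l_j,l_i) |B_ji|^2 - (sum_i l_i B_ii)^2 and
   gamma^f_D([D,A],[D,A]) = sum_ij (l_j - l_i)^2 |B_ji|^2 / M_f(l_j,l_i).
   Off the diagonal, the hypothesis at x = l_j / l_i gives
   M_g(l_j,l_i) >= c (l_j - l_i)^2 / M_f(l_j,l_i) termwise.  Diagonal terms
   vanish on the Fisher side and contribute sum_i l_i B_ii^2 to the covariance
   side, which dominates (sum_i l_i B_ii)^2 because the l_i are probability
   weights. *)

Section Scalars.
Variable R : realType.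
Implicit Types (r : R) (z : R[i]).

Definition sqmod z : R := complex.Re z ^+ 2 + complex.Im z ^+ 2.

Lemma sqmod_ge0 z : 0 <= sqmod z.
Proof. by rewrite addr_ge0 ?sqr_ge0. Qed.

Lemma sqmod_scale r z : sqmod (toC r * z) = r ^+ 2 * sqmod z.
Proof. by case: z => a b; rewrite /sqmod /toC /=; ring. Qed.

Lemma conjC_mul_toC r z : z^* * (toC r * z) = toC (r * sqmod z).
Proof.
case: z => a b; rewrite /toC /sqmod /=.
by apply/eqP; rewrite eq_complex /=; apply/andP; split; apply/eqP; ring.
Qed.

Lemma toC_Re z : z^* = z -> toC (complex.Re z) = z.
Proof.
case: z => a b /= [] hb; rewrite /toC.
by apply/eqP; rewrite eq_complex /= eqxx /=; apply/eqP; lra.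
Qed.

Lemma sqmod_real z : z^* = z -> sqmod z = complex.Re z ^+ 2.
Proof. by move=> /toC_Re <-; rewrite /sqmod /toC /=; ring. Qed.

End Scalars.

Section Conjugation.
Variables (R : realType) (n : nat).
Local Notation C := R[i].
Implicit Types (U X M : 'M[C]_n) (lam : 'I_n -> R).

Lemma adjmxM m p q (X : 'M[C]_(m, p)) (Y : 'M[C]_(p, q)) :
  adjmx (X *m Y) = adjmx Y *m adjmx X.
Proof. by rewrite /adjmx trmx_mul map_mxM. Qed.

Lemma adjmxK m p (X : 'M[C]_(m, p)) : adjmx (adjmx X) = X.
Proof. exact: trmxCK. Qed.

Lemma hermsymmx_adj X : X \is hermsymmx -> adjmx X = X.
Proof. by move/is_hermitianmxP => {2}->; rewrite expr0 scale1r. Qed.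

Lemma selfadj_diag_conjC X i : adjmx X = X -> (X i i)^* = X i i.
Proof. by move=> hX; rewrite -[in RHS]hX !mxE. Qed.

Lemma unitarymx_adjK U : U \is unitarymx -> adjmx U *m U = 1%:M.
Proof. by rewrite -trmxC_unitary => /unitarymxP; rewrite trmxCK. Qed.

Lemma diagCE lam : diagC lam = diag_mx (\row_i toC (lam i)).
Proof. by apply/matrixP => i j; rewrite !mxE. Qed.

Lemma mxtrace_adj_conj U X M : U \is unitarymx ->
  \tr (adjmx X *m (U *m M *m adjmx U)) = \tr (adjmx (adjmx U *m X *m U) *m M).
Proof. by move=> hU; rewrite !adjmxM adjmxK !mulmxA mxtrace_mulC !mulmxA. Qed.

Lemma mxtrace_adj_scale (r : 'I_n -> 'I_n -> R) X :
  \tr (adjmx X *m \matrix_(i, j) (toC (r i j) * X i j))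
  = toC (\sum_i \sum_j r j i * sqmod (X j i)).
Proof.
rewrite /mxtrace /toC rmorph_sum; apply: eq_bigr => i _.
by rewrite mxE rmorph_sum; apply: eq_bigr => j _; rewrite !mxE conjC_mul_toC.
Qed.

Lemma commmx_conj U lam X : U \is unitarymx ->
  adjmx U *m commmx (U *m diagC lam *m adjmx U) X *m U =
  \matrix_(i, j) (toC (lam i - lam j) * (adjmx U *m X *m U) i j).
Proof.
move=> hU; set B := adjmx U *m X *m U.
have -> : adjmx U *m commmx (U *m diagC lam *m adjmx U) X *m U =
          diagC lam *m B - B *m diagC lam.
  rewrite /commmx mulmxBr mulmxBl !mulmxA unitarymx_adjK // mul1mx.
  by rewrite -!(mulmxA _ (adjmx U) U) unitarymx_adjK // mulmx1.
clearbody B; rewrite diagCE mul_diag_mx mul_mx_diag; apply/matrixP => i j.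
by rewrite !mxE /toC rmorphB mulrBl (mulrC (B i j)).
Qed.

Lemma mxtrace_conj_diag_mul U lam X :
  adjmx (adjmx U *m X *m U) = adjmx U *m X *m U ->
  \tr (U *m diagC lam *m adjmx U *m X) =
  toC (\sum_i lam i * complex.Re ((adjmx U *m X *m U) i i)).
Proof.
move=> hB; have -> : \tr (U *m diagC lam *m adjmx U *m X) =
                     \tr (diagC lam *m (adjmx U *m X *m U)).
  by rewrite -!mulmxA mxtrace_mulC !mulmxA.
move: hB; set B := adjmx U *m X *m U; clearbody B => hB.
rewrite diagCE mul_diag_mx /toC rmorph_sum; apply: eq_bigr => i _.
rewrite !mxE rmorphM; congr (_ * _); exact/esym/toC_Re/selfadj_diag_conjC.
Qed.

End Conjugation.

Section Spectrum.
Variables (R : realType) (n : nat).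
Local Notation C := R[i].
Implicit Types (U : 'M[C]_n) (lam : 'I_n -> R).

Lemma pdmx_spectrum_gt0 U lam i : U \is unitarymx ->
  pdmx (U *m diagC lam *m adjmx U) -> 0 < lam i.
Proof.
move=> hU hD; set e : 'cV[C]_n := delta_mx i 0.
have adj_e : adjmx e = delta_mx 0 i.
  by apply/matrixP => a b; rewrite !mxE; case: eqP; case: eqP; rewrite ?conjC0 ?conjC1.
have Ue_neq0 : U *m e != 0.
  apply: contra_neq (oner_neq0 C) => Ue0.
  have := congr1 (mulmx (adjmx U)) Ue0.
  rewrite mulmxA unitarymx_adjK // mul1mx mulmx0 => /matrixP /(_ i 0).
  by rewrite !mxE !eqxx.
have := hD _ Ue_neq0; rewrite adjmxM adj_e !mulmxA -(mulmxA _ (adjmx U) U).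
rewrite unitarymx_adjK // mulmx1 -(mulmxA _ (adjmx U) U) unitarymx_adjK // mulmx1.
by rewrite -rowE -colE !mxE eqxx mulr1n /toC ltcR.
Qed.

Lemma mxtrace_conj_diag U lam : U \is unitarymx ->
  \tr (U *m diagC lam *m adjmx U) = toC (\sum_i lam i).
Proof.
move=> hU; rewrite mxtrace_mulC mulmxA unitarymx_adjK // mul1mx diagCE mxtrace_diag.
by rewrite /toC rmorph_sum; apply: eq_bigr => i _; rewrite mxE.
Qed.

End Spectrum.

Lemma sqr_wmean_le (R : realFieldType) (I : finType) (w x : I -> R) :
  (forall i, 0 <= w i) -> \sum_i w i = 1 ->
  (\sum_i w i * x i) ^+ 2 <= \sum_i w i * x i ^+ 2.
Proof.
move=> w_ge0 w_sum1; set m := \sum_i w i * x i.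
rewrite -subr_ge0.
have -> : \sum_i w i * x i ^+ 2 - m ^+ 2 = \sum_i w i * (x i - m) ^+ 2.
  have -> : \sum_i w i * (x i - m) ^+ 2 =
            \sum_i (w i * x i ^+ 2 - (2 * m * (w i * x i) - m ^+ 2 * w i)).
    by apply: eq_bigr => i _; ring.
  by rewrite !sumrB -!mulr_sumr w_sum1 -/m; ring.
by apply: sumr_ge0 => i _; rewrite mulr_ge0 ?sqr_ge0.
Qed.

Section MeanInequalities.
Variable R : realType.
Implicit Types (f g : R -> R) (a b c : R).

Lemma Mf_diag f a : f 1 = 1 -> a != 0 -> Mf f a a = a.
Proof. by move=> f1 a_neq0; rewrite /Mf divff // f1 mulr1. Qed.

Lemma Mf_sqrB_le f g c a b : (forall t, 0 < t -> 0 < f t) ->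
  (forall x, 0 < x -> c * ((x - 1) ^+ 2 / f x) <= g x) ->
  0 < a -> 0 < b -> c * ((Mf f a b)^-1 * (a - b) ^+ 2) <= Mf g a b.
Proof.
move=> f_gt0 fg a_gt0 b_gt0; rewrite /Mf; set x := a / b.
have x_gt0 : 0 < x by rewrite divr_gt0.
have -> : c * ((b * f x)^-1 * (a - b) ^+ 2) = b * (c * ((x - 1) ^+ 2 / f x)).
  have -> : a = x * b by rewrite /x divfK ?gt_eqF.
  by field; rewrite !gt_eqF ?f_gt0.
by apply: ler_wpM2l; [exact: ltW | exact: fg].
Qed.

Lemma spectral_fisher_le_cov f g c (I : finType) (lam x : I -> R) (N : I -> I -> R) :
  (forall t, 0 < t -> 0 < f t) -> g 1 = 1 ->
  (forall t, 0 < t -> c * ((t - 1) ^+ 2 / f t) <= g t) ->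
  (forall i, 0 < lam i) -> \sum_i lam i = 1 ->
  (forall i j, 0 <= N i j) -> (forall i, N i i = x i ^+ 2) ->
  c * (\sum_i \sum_j (Mf f (lam j) (lam i))^-1 * ((lam j - lam i) ^+ 2 * N j i))
  <= \sum_i \sum_j Mf g (lam j) (lam i) * N j i - (\sum_i lam i * x i) ^+ 2.
Proof.
move=> f_gt0 g1 fg lam_gt0 lam_sum1 N_ge0 N_diag.
have termwise i j : (j == i)%:R * (lam i * x i ^+ 2) <=
    Mf g (lam j) (lam i) * N j i
    - c * ((Mf f (lam j) (lam i))^-1 * ((lam j - lam i) ^+ 2 * N j i)).
  have [->|neq_ji] := eqVneq j i.
    by rewrite Mf_diag ?gt_eqF // subrr expr0n /= !mul0r !mulr0 subr0 mul1r N_diag.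
  rewrite mul0r subr_ge0 [_ * (_ * N j i)]mulrA mulrA.
  by apply: ler_wpM2r => //; apply: Mf_sqrB_le.
rewrite lerBrDr -lerBrDl mulr_sumr -sumrB.
apply: le_trans (sqr_wmean_le _ (fun i => ltW (lam_gt0 i)) lam_sum1) _.
apply: ler_sum => i _; rewrite mulr_sumr -sumrB.
apply: le_trans (ler_sum _ (fun j _ => termwise i j)).
by rewrite (bigD1 i) //= eqxx mul1r big1 ?addr0 // => j /negPf ->; rewrite mul0r.
Qed.

End MeanInequalities.

Theorem theorem1 (R : realType) (n : nat) (f g : R -> R) (c : R)
  (D A U : 'M[R[i]]_n) (lam : 'I_n -> R) :
  pdmx D -> \tr D = 1 ->
  U \is unitarymx -> D = U *m diagC lam *m adjmx U ->
  A \is hermsymmx ->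
  standard f -> standard g ->
  0 < c ->
  (forall x : R, 0 < x -> c * ((x - 1) ^+ 2 / f x) <= g x) ->
  toC c * qFisher f U lam (commmx D A) (commmx D A) <= qCov g D U lam A A.
Proof.
move=> hD htr hU hDe hA [f_gt0 _ _ _] [_ _ g1 _] _ fg; subst D.
have lam_gt0 i : 0 < lam i := pdmx_spectrum_gt0 i hU hD.
have lam_sum1 : \sum_i lam i = 1.
  by move: htr; rewrite mxtrace_conj_diag // => /(congr1 (@complex.Re R)).
have hB : adjmx (adjmx U *m A *m U) = adjmx U *m A *m U.
  by rewrite !adjmxM adjmxK (hermsymmx_adj hA) mulmxA.
rewrite /qFisher /qCov /Jf_inv /Jf !mxtrace_adj_conj // !mxtrace_adj_scale.
rewrite (hermsymmx_adj hA) mxtrace_conj_diag_mul //.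
under eq_bigr do under eq_bigr do rewrite commmx_conj // mxE sqmod_scale.
rewrite /toC -!rmorphM -rmorphB lecR -expr2.
apply: spectral_fisher_le_cov => // [i j|i]; first exact: sqmod_ge0.
exact/sqmod_real/selfadj_diag_conjC.
Qed.
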